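(* Let $\gamma$ be a unit speed line of curvature ($\tau_g\equiv 0$) on a smooth oriented surface $M\subset E^3$, with nowhere-vanishing normal curvature $k_n$, whose position vector always lies in the plane spanned by $\{T,V\}$. Then $\gamma$ is an isophotic curve if and only if $k_n$ is a constant function.
   Context: For a unit speed curve $\gamma$ on an oriented surface $M\subset E^3$, the Darboux frame is $T=\gamma'$, $U$ = unit normal of $M$ along $\gamma$, $V = U\times T$, satisfying $T' = k_g V + k_n U$, $V' = -k_g T + \tau_g U$, $U' = -k_n T - \tau_g V$; here $k_g$, $k_n$, $\tau_g$ are the geodesic curvature, normal curvature and geodesic torsion. The curve $\gamma$ is an isophotic curve if there is a fixed unit vector $d$ and a constant angle $\phi$ with $\langle U, d\rangle = \cos\phi$ along $\gamma$. ''Position vector lies in the plane spanned by $\{T,V\}$'' means $\gamma(s) = \mu_1(s)T(s) + \mu_2(s)V(s)$ for differentiable functions $\mu_1,\mu_2$. *)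

From Stdlib Require Import Reals.
From Coquelicot Require Import Coquelicot.
Open Scope R_scope.

Record V3 := mk3 { x1 : R; x2 : R; x3 : R }.

Definition vadd (u v : V3) : V3 := mk3 (x1 u + x1 v) (x2 u + x2 v) (x3 u + x3 v).
Definition vscal (c : R) (v : V3) : V3 := mk3 (c * x1 v) (c * x2 v) (c * x3 v).
Definition dot (u v : V3) : R := x1 u * x1 v + x2 u * x2 v + x3 u * x3 v.
Definition vnorm (v : V3) : R := sqrt (dot v v).
Definition cross (u v : V3) : V3 :=
  mk3 (x2 u * x3 v - x3 u * x2 v)
      (x3 u * x1 v - x1 u * x3 v)
      (x1 u * x2 v - x2 u * x1 v).

Definition vderiv (f : R -> V3) (t : R) (f't : V3) : Prop :=
  is_derive (fun s => x1 (f s)) t (x1 f't) /\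
  is_derive (fun s => x2 (f s)) t (x2 f't) /\
  is_derive (fun s => x3 (f s)) t (x3 f't).

Definition smooth_on (a b : R) (f : R -> R) : Prop :=
  forall (n : nat) (t : R), a < t < b -> ex_derive_n f n t.

(* Darboux frame data of a unit speed curve gam : (a,b) -> E^3 lying on an
   oriented surface with unit normal U along gam:
   T = gam', |T| = 1, |U| = 1, U _|_ T, V = U x T, and
   T' = kg V + kn U,  V' = -kg T + tg U,  U' = -kn T - tg V. *)
Definition darboux_frame (a b : R) (gam T V U : R -> V3) (kg kn tg : R -> R) : Prop :=
  forall t, a < t < b ->
    vderiv gam t (T t) /\
    vnorm (T t) = 1 /\ vnorm (U t) = 1 /\ dot (U t) (T t) = 0 /\
    V t = cross (U t) (T t) /\
    vderiv T t (vadd (vscal (kg t) (V t)) (vscal (kn t) (U t))) /\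
    vderiv V t (vadd (vscal (- kg t) (T t)) (vscal (tg t) (U t))) /\
    vderiv U t (vadd (vscal (- kn t) (T t)) (vscal (- tg t) (V t))).

Definition isophotic (a b : R) (U : R -> V3) : Prop :=
  exists (d : V3) (phi : R), vnorm d = 1 /\
    forall t, a < t < b -> dot (U t) d = cos phi.

From Stdlib Require Import Reals Lra.
From Coquelicot Require Import Coquelicot.
Open Scope R_scope.

(* Differentiating gam = mu1 T + mu2 V with the Darboux equations and comparing
   coefficients in the orthonormal frame (T, V, U) gives
     mu1 kn + mu2 tg = 0,   mu1' - mu2 kg = 1,   mu1 kg + mu2' = 0.
   With tg = 0 and kn <> 0 this forces mu1 = 0, mu2 constant and mu2 kg = -1,
   so kg is a nonzero constant k0.
   (=>) If <U, d> = cos phi, differentiating gives <T, d> = 0, then <V, d> is a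
   constant v0 and k0 v0 + kn cos phi = 0; cos phi = 0 is impossible since d
   would be orthogonal to the whole frame, so kn = - k0 v0 / cos phi.
   (<=) If kn = c, the unit vector d = (c V - k0 U) / sqrt (c^2 + k0^2) has zero
   derivative, hence is fixed, and <U, d> = - k0 / sqrt (c^2 + k0^2). *)

Lemma v3_ext u v : x1 u = x1 v -> x2 u = x2 v -> x3 u = x3 v -> u = v.
Proof. destruct u, v; simpl; intros; subst; reflexivity. Qed.

Lemma dot_comm u w : dot u w = dot w u.
Proof. destruct u, w; unfold dot; simpl; ring. Qed.

Lemma dot_addl u v w : dot (vadd u v) w = dot u w + dot v w.
Proof. destruct u, v, w; unfold dot, vadd; simpl; ring. Qed.

Lemma dot_addr u v w : dot w (vadd u v) = dot w u + dot w v.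
Proof. destruct u, v, w; unfold dot, vadd; simpl; ring. Qed.

Lemma dot_scall c u w : dot (vscal c u) w = c * dot u w.
Proof. destruct u, w; unfold dot, vscal; simpl; ring. Qed.

Lemma dot_scalr c u w : dot w (vscal c u) = c * dot w u.
Proof. destruct u, w; unfold dot, vscal; simpl; ring. Qed.

Lemma dot_self_nonneg v : 0 <= dot v v.
Proof. destruct v as [p q r]; unfold dot; simpl; nra. Qed.

Lemma vnorm1_dot v : vnorm v = 1 -> dot v v = 1.
Proof.
  unfold vnorm; intros H.
  rewrite <- (sqrt_sqrt (dot v v) (dot_self_nonneg v)), H; ring.
Qed.

Definition orthonormal3 (T V U : V3) : Prop :=
  dot T T = 1 /\ dot V V = 1 /\ dot U U = 1 /\
  dot T V = 0 /\ dot T U = 0 /\ dot V U = 0.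

Definition comb (p q r : R) (T V U : V3) : V3 :=
  vadd (vadd (vscal p T) (vscal q V)) (vscal r U).

Lemma comb_coords p q r T V U : orthonormal3 T V U ->
  dot (comb p q r T V U) T = p /\ dot (comb p q r T V U) V = q /\
  dot (comb p q r T V U) U = r.
Proof.
  intros (TT & VV & UU & TV & TU & VU); unfold comb.
  rewrite !dot_addl, !dot_scall.
  rewrite (dot_comm V T), (dot_comm U T), (dot_comm U V).
  rewrite TT, VV, UU, TV, TU, VU; repeat split; ring.
Qed.

Lemma comb_inj p q r p' q' r' T V U : orthonormal3 T V U ->
  comb p q r T V U = comb p' q' r' T V U -> p = p' /\ q = q' /\ r = r'.
Proof.
  intros Hon E.
  destruct (comb_coords p q r T V U Hon) as (Ep & Eq & Er).
  destruct (comb_coords p' q' r' T V U Hon) as (Ep' & Eq' & Er').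
  rewrite E in Ep, Eq, Er; lra.
Qed.

Lemma comb_norm2 p q r T V U : orthonormal3 T V U ->
  dot (comb p q r T V U) (comb p q r T V U) = p ^ 2 + q ^ 2 + r ^ 2.
Proof.
  intros Hon.
  destruct (comb_coords p q r T V U Hon) as (Ep & Eq & Er).
  unfold comb at 2; rewrite !dot_addr, !dot_scalr, Ep, Eq, Er; ring.
Qed.

Lemma cross_frame_orthonormal T U : dot T T = 1 -> dot U U = 1 -> dot U T = 0 ->
  orthonormal3 T (cross U T) U.
Proof.
  intros TT UU UT.
  assert (VV : dot (cross U T) (cross U T) = dot U U * dot T T - dot U T * dot U T)
    by (destruct U, T; unfold dot, cross; simpl; ring).
  unfold orthonormal3; repeat split; try assumption.
  - rewrite VV, TT, UU, UT; ring.
  - destruct U, T; unfold dot, cross; simpl; ring.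
  - rewrite dot_comm; assumption.
  - destruct U, T; unfold dot, cross; simpl; ring.
Qed.

Lemma cross_frame_parseval T U d : dot T T = 1 -> dot U U = 1 -> dot U T = 0 ->
  dot d d = dot T d ^ 2 + dot (cross U T) d ^ 2 + dot U d ^ 2.
Proof.
  intros TT UU UT.
  assert (G : dot (cross U T) d ^ 2 =
    dot U U * (dot T T * dot d d - dot T d * dot T d)
    - dot U T * (dot U T * dot d d - dot T d * dot U d)
    + dot U d * (dot U T * dot T d - dot T T * dot U d))
    by (destruct U, T, d; unfold dot, cross; simpl; ring).
  rewrite G, TT, UU, UT; ring.
Qed.

Lemma locally_interval (a b t : R) (P : R -> Prop) :
  a < t < b -> (forall s, a < s < b -> P s) -> locally t P.
Proof.
  intros Ht HP; eapply filter_imp; [exact HP|].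
  exact (open_and _ _ (open_gt a) (open_lt b) t Ht).
Qed.

Lemma constant_of_derive_zero (f : R -> R) (a b : R) :
  (forall t, a < t < b -> is_derive f t 0) ->
  forall x y, a < x < b -> a < y < b -> f x = f y.
Proof.
  intros Hd x y Hx Hy.
  assert (Hin : forall z, Rmin x y <= z <= Rmax x y -> a < z < b)
    by (intros z Hz; unfold Rmin, Rmax in Hz; destruct (Rle_dec x y); lra).
  destruct (MVT_gen f x y (fun _ => 0)) as [c [_ Hc]].
  - intros z Hz; apply Hd, Hin; lra.
  - intros z Hz; apply continuity_pt_filterlim.
    apply (ex_derive_continuous (K := R_AbsRing) (V := R_NormedModule)).
    exists 0; apply Hd, Hin, Hz.
  - lra.
Qed.

Lemma derive_zero_of_constant (f : R -> R) (a b c t l : R) :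
  (forall s, a < s < b -> f s = c) -> a < t < b -> is_derive f t l -> l = 0.
Proof.
  intros Hc Ht Hd.
  assert (H0 : is_derive f t 0).
  { apply (is_derive_ext_loc (fun _ => c)); [|apply (is_derive_const c)].
    apply (locally_interval a b); [exact Ht|].
    intros s Hs; symmetry; auto. }
  rewrite <- (is_derive_unique f t l Hd), <- (is_derive_unique f t 0 H0).
  reflexivity.
Qed.

Lemma vderiv_unique_on (f g : R -> V3) (a b t : R) (f' g' : V3) :
  (forall s, a < s < b -> f s = g s) -> a < t < b ->
  vderiv f t f' -> vderiv g t g' -> f' = g'.
Proof.
  intros E Ht (A1 & A2 & A3) (B1 & B2 & B3).
  assert (Same : forall (h : V3 -> R) l l', is_derive (fun s => h (f s)) t l ->
                   is_derive (fun s => h (g s)) t l' -> l = l').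
  { intros h l l' Hf Hg.
    apply (is_derive_ext_loc _ (fun s => h (g s))) in Hf.
    - rewrite <- (is_derive_unique _ _ _ Hf), <- (is_derive_unique _ _ _ Hg).
      reflexivity.
    - apply (locally_interval a b); [exact Ht|].
      intros s Hs; rewrite E by exact Hs; reflexivity. }
  apply v3_ext; eapply Same; eassumption.
Qed.

Lemma vderiv_add (f g : R -> V3) (t : R) (f' g' : V3) : vderiv f t f' -> vderiv g t g' ->
  vderiv (fun s => vadd (f s) (g s)) t (vadd f' g').
Proof.
  intros (A1 & A2 & A3) (B1 & B2 & B3).
  split; [|split]; simpl;
    apply (is_derive_plus (K := R_AbsRing) (V := R_NormedModule)); assumption.
Qed.

Lemma vderiv_scal (m : R -> R) (f : R -> V3) (t m' : R) (f' : V3) :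
  is_derive m t m' -> vderiv f t f' ->
  vderiv (fun s => vscal (m s) (f s)) t (vadd (vscal m' (f t)) (vscal (m t) f')).
Proof.
  intros Hm (A1 & A2 & A3).
  split; [|split]; simpl;
    apply (is_derive_mult (K := R_AbsRing) m); try assumption; intros; apply Rmult_comm.
Qed.

Lemma vderiv_scal_const (c : R) (f : R -> V3) (t : R) (f' : V3) : vderiv f t f' ->
  vderiv (fun s => vscal c (f s)) t (vscal c f').
Proof.
  intros (A1 & A2 & A3).
  split; [|split]; simpl; apply (is_derive_scal (fun s => _)); assumption.
Qed.

Lemma vderiv_dot_const (f : R -> V3) (d : V3) (t : R) (f' : V3) : vderiv f t f' ->
  is_derive (fun s => dot (f s) d) t (dot f' d).
Proof.
  intros (A1 & A2 & A3); unfold dot.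
  apply (is_derive_plus (K := R_AbsRing) (V := R_NormedModule));
    [apply (is_derive_plus (K := R_AbsRing) (V := R_NormedModule))|];
    apply (is_derive_scal_l (K := R_AbsRing) (V := R_NormedModule) (fun s => _));
    assumption.
Qed.

Lemma vconstant_of_vderiv_zero (f : R -> V3) (a b : R) :
  (forall t, a < t < b -> vderiv f t (mk3 0 0 0)) ->
  forall x y, a < x < b -> a < y < b -> f x = f y.
Proof.
  intros Hd x y Hx Hy.
  apply v3_ext; apply (constant_of_derive_zero (fun s => _ (f s)) a b);
    try assumption; intros t Ht; apply (Hd t Ht).
Qed.

Section DarbouxFrame.

Variables (a b : R) (gam T V U : R -> V3) (kg kn tg : R -> R).
Hypothesis Hframe : darboux_frame a b gam T V U kg kn tg.

Lemma darboux_orthonormal t : a < t < b -> orthonormal3 (T t) (V t) (U t).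
Proof.
  intros Ht; destruct (Hframe t Ht) as (_ & HT & HU & HUT & HV & _).
  rewrite HV; apply cross_frame_orthonormal; auto using vnorm1_dot.
Qed.

Lemma darboux_parseval t d : a < t < b ->
  dot d d = dot (T t) d ^ 2 + dot (V t) d ^ 2 + dot (U t) d ^ 2.
Proof.
  intros Ht; destruct (Hframe t Ht) as (_ & HT & HU & HUT & HV & _).
  rewrite HV; apply cross_frame_parseval; auto using vnorm1_dot.
Qed.

Lemma darboux_dot_derive d t : a < t < b ->
  is_derive (fun s => dot (T s) d) t (kg t * dot (V t) d + kn t * dot (U t) d) /\
  is_derive (fun s => dot (V s) d) t (- kg t * dot (T t) d + tg t * dot (U t) d) /\
  is_derive (fun s => dot (U s) d) t (- kn t * dot (T t) d - tg t * dot (V t) d).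
Proof.
  intros Ht; destruct (Hframe t Ht) as (_ & _ & _ & _ & _ & HdT & HdV & HdU).
  split; [|split].
  - generalize (vderiv_dot_const _ d _ _ HdT).
    rewrite dot_addl, !dot_scall; auto.
  - generalize (vderiv_dot_const _ d _ _ HdV).
    rewrite dot_addl, !dot_scall; auto.
  - generalize (vderiv_dot_const _ d _ _ HdU).
    rewrite dot_addl, !dot_scall.
    replace (- kn t * dot (T t) d - tg t * dot (V t) d)
      with (- kn t * dot (T t) d + - tg t * dot (V t) d) by ring; auto.
Qed.

(* Differentiating gam = mu1 T + mu2 V and comparing frame coordinates with
   gam' = T yields three scalar relations between mu1, mu2 and the curvatures. *)
Lemma position_coefficients (mu1 mu2 : R -> R) (t : R) :
  (forall s, a < s < b -> gam s = vadd (vscal (mu1 s) (T s)) (vscal (mu2 s) (V s))) ->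
  a < t < b -> ex_derive mu1 t -> ex_derive mu2 t ->
  Derive mu1 t - mu2 t * kg t = 1 /\ mu1 t * kg t + Derive mu2 t = 0 /\
  mu1 t * kn t + mu2 t * tg t = 0.
Proof.
  intros Hgam Ht Hm1 Hm2.
  destruct (Hframe t Ht) as (Hg & _ & _ & _ & _ & HdT & HdV & _).
  pose proof (vderiv_add _ _ _ _ _ (vderiv_scal _ _ _ _ _ (Derive_correct _ _ Hm1) HdT)
                                   (vderiv_scal _ _ _ _ _ (Derive_correct _ _ Hm2) HdV))
    as Hdiff.
  pose proof (vderiv_unique_on _ _ a b t _ _ Hgam Ht Hg Hdiff) as E.
  assert (Coords : comb 1 0 0 (T t) (V t) (U t) =
    comb (Derive mu1 t - mu2 t * kg t) (mu1 t * kg t + Derive mu2 t)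
         (mu1 t * kn t + mu2 t * tg t) (T t) (V t) (U t)).
  { transitivity (T t).
    - apply v3_ext; unfold comb, vadd, vscal; simpl; ring.
    - rewrite E at 1; apply v3_ext; unfold comb, vadd, vscal; simpl; ring. }
  destruct (comb_inj _ _ _ _ _ _ _ _ _ (darboux_orthonormal t Ht) Coords)
    as (E1 & E2 & E3).
  auto.
Qed.

Hypothesis Htg : forall t, a < t < b -> tg t = 0.

(* If the position vector lies in span{T, V}, then kg is a nonzero constant:
   mu1 = 0, mu2 is constant and mu2 kg = -1. *)
Lemma geodesic_curvature_constant (mu1 mu2 : R -> R) :
  a < b -> (forall t, a < t < b -> kn t <> 0) ->
  (forall t, a < t < b -> ex_derive mu1 t) ->
  (forall t, a < t < b -> ex_derive mu2 t) ->
  (forall t, a < t < b -> gam t = vadd (vscal (mu1 t) (T t)) (vscal (mu2 t) (V t))) ->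
  exists k0, k0 <> 0 /\ forall t, a < t < b -> kg t = k0.
Proof.
  intros Hab Hkn Hm1 Hm2 Hgam.
  pose (m := (a + b) / 2); assert (Hm : a < m < b) by (unfold m; lra).
  pose proof (fun t Ht => position_coefficients mu1 mu2 t Hgam Ht (Hm1 t Ht) (Hm2 t Ht))
    as Coef.
  assert (Hmu1 : forall t, a < t < b -> mu1 t = 0).
  { intros t Ht; destruct (Coef t Ht) as (_ & _ & E).
    rewrite Htg in E by exact Ht.
    destruct (Rmult_integral (mu1 t) (kn t)) as [Z | Z]; [lra | exact Z |].
    exfalso; exact (Hkn t Ht Z). }
  assert (Hmu2kg : forall t, a < t < b -> mu2 t * kg t = -1).
  { intros t Ht; destruct (Coef t Ht) as (E & _ & _).
    rewrite (derive_zero_of_constant mu1 a b 0 t _ Hmu1 Ht (Derive_correct _ _ (Hm1 t Ht)))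
      in E; lra. }
  assert (Hmu2 : forall t, a < t < b -> mu2 t = mu2 m).
  { intros t Ht; apply (constant_of_derive_zero mu2 a b); auto.
    intros s Hs; destruct (Coef s Hs) as (_ & E & _).
    rewrite Hmu1 in E by exact Hs.
    replace 0 with (Derive mu2 s) by lra; exact (Derive_correct _ _ (Hm2 s Hs)). }
  exists (kg m); split.
  - intros Z; pose proof (Hmu2kg m Hm) as E; rewrite Z in E; lra.
  - intros t Ht; pose proof (Hmu2kg t Ht) as Et; pose proof (Hmu2kg m Hm) as Em.
    rewrite (Hmu2 t Ht) in Et.
    apply (Rmult_eq_reg_l (mu2 m)); [lra|].
    intros Z; rewrite Z in Em; lra.
Qed.

Section ConstantGeodesicCurvature.

Variable k0 : R.
Hypothesis Hk0 : k0 <> 0.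
Hypothesis Hkg : forall t, a < t < b -> kg t = k0.

(* If <U, d> is constant then, since kn <> 0, d stays orthogonal to T; hence
   <V, d> is constant and k0 <V, d> + kn <U, d> = 0, which forces kn constant. *)
Lemma isophotic_normal_curvature_constant :
  a < b -> (forall t, a < t < b -> kn t <> 0) ->
  isophotic a b U -> exists c, forall t, a < t < b -> kn t = c.
Proof.
  intros Hab Hkn [d [phi [Hd Hud]]].
  pose (m := (a + b) / 2); assert (Hm : a < m < b) by (unfold m; lra).
  assert (HTd : forall t, a < t < b -> dot (T t) d = 0).
  { intros t Ht; destruct (darboux_dot_derive d t Ht) as (_ & _ & DU).
    pose proof (derive_zero_of_constant _ a b _ t _ Hud Ht DU) as Z.
    rewrite Htg in Z by exact Ht.
    destruct (Rmult_integral (kn t) (dot (T t) d)) as [K | K]; [lra | | exact K].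
    exfalso; exact (Hkn t Ht K). }
  assert (HVd : forall t, a < t < b -> dot (V t) d = dot (V m) d).
  { intros t Ht; apply (constant_of_derive_zero (fun s => dot (V s) d) a b); auto.
    intros s Hs; destruct (darboux_dot_derive d s Hs) as (_ & DV & _).
    rewrite HTd, Htg in DV by exact Hs.
    replace 0 with (- kg s * 0 + 0 * dot (U s) d) by ring; exact DV. }
  assert (Balance : forall t, a < t < b -> k0 * dot (V m) d + kn t * cos phi = 0).
  { intros t Ht; destruct (darboux_dot_derive d t Ht) as (DT & _ & _).
    rewrite <- (HVd t Ht), <- (Hkg t Ht), <- (Hud t Ht).
    exact (derive_zero_of_constant _ a b _ t _ HTd Ht DT). }
  assert (Hcos : cos phi <> 0).
  { intros C; pose proof (Balance m Hm) as B; rewrite C in B.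
    assert (V0 : dot (V m) d = 0).
    { destruct (Rmult_integral k0 (dot (V m) d)) as [K | K]; [lra | | exact K].
      exfalso; exact (Hk0 K). }
    pose proof (darboux_parseval m d Hm) as P.
    rewrite (vnorm1_dot d Hd), HTd, V0, Hud, C in P by exact Hm; lra. }
  exists (- k0 * dot (V m) d / cos phi); intros t Ht.
  pose proof (Balance t Ht); field_simplify; [|exact Hcos].
  apply (Rmult_eq_reg_r (cos phi)); [|exact Hcos].
  field_simplify; [lra | exact Hcos].
Qed.

(* Conversely, if kn = c the unit vector (c V - k0 U) / sqrt (c^2 + k0^2) is
   parallel along the curve and makes a constant angle with U. *)
Lemma normal_curvature_constant_isophotic c :
  a < b -> (forall t, a < t < b -> kn t = c) -> isophotic a b U.
Proof.
  intros Hab Hc.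
  pose (m := (a + b) / 2); assert (Hm : a < m < b) by (unfold m; lra).
  pose (n := sqrt (c * c + k0 * k0)).
  assert (Hpos : 0 < c * c + k0 * k0)
    by (assert (0 < k0 * k0) by (apply Rsqr_pos_lt; exact Hk0); nra).
  assert (Hn : 0 < n) by (apply sqrt_lt_R0; exact Hpos).
  assert (Hnn : n * n = c * c + k0 * k0) by (apply sqrt_sqrt; lra).
  pose (D := fun s => comb 0 (c / n) (- k0 / n) (T s) (V s) (U s)).
  assert (HD : forall t, a < t < b -> vderiv D t (mk3 0 0 0)).
  { intros t Ht; destruct (Hframe t Ht) as (_ & _ & _ & _ & _ & HdT & HdV & HdU).
    pose proof (vderiv_add _ _ _ _ _
      (vderiv_add _ _ _ _ _ (vderiv_scal_const 0 _ _ _ HdT)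
                            (vderiv_scal_const (c / n) _ _ _ HdV))
      (vderiv_scal_const (- k0 / n) _ _ _ HdU)) as H.
    rewrite Hkg, Htg, Hc in H by exact Ht.
    replace (mk3 0 0 0) with
      (vadd (vadd (vscal 0 (vadd (vscal k0 (V t)) (vscal c (U t))))
                  (vscal (c / n) (vadd (vscal (- k0) (T t)) (vscal 0 (U t)))))
            (vscal (- k0 / n) (vadd (vscal (- c) (T t)) (vscal (- 0) (V t))))).
    - exact H.
    - apply v3_ext; unfold vadd, vscal; simpl; field; lra. }
  assert (Hangle : -1 <= - k0 / n <= 1).
  { assert (Hq : - k0 / n * n = - k0) by (field; lra).
    assert (k0 <= n) by nra; assert (- n <= k0) by nra; split; nra. }
  exists (D m), (acos (- k0 / n)); split.
  - unfold vnorm, D; rewrite (comb_norm2 _ _ _ _ _ _ (darboux_orthonormal m Hm)).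
    replace (0 ^ 2 + (c / n) ^ 2 + (- k0 / n) ^ 2) with ((c * c + k0 * k0) / (n * n))
      by (field; lra).
    rewrite Hnn, Rdiv_diag by lra; apply sqrt_1.
  - intros t Ht; rewrite cos_acos by exact Hangle.
    rewrite <- (vconstant_of_vderiv_zero D a b HD t m Ht Hm).
    rewrite dot_comm; apply (comb_coords _ _ _ _ _ _ (darboux_orthonormal t Ht)).
Qed.

End ConstantGeodesicCurvature.

End DarbouxFrame.

Theorem corollary4p2 (a b : R) (gam T V U : R -> V3) (kg kn tg mu1 mu2 : R -> R) :
  a < b ->
  darboux_frame a b gam T V U kg kn tg ->
  smooth_on a b kg -> smooth_on a b kn -> smooth_on a b tg ->
  smooth_on a b mu1 -> smooth_on a b mu2 ->
  (forall t, a < t < b -> tg t = 0) ->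
  (forall t, a < t < b -> kn t <> 0) ->
  (forall t, a < t < b -> gam t = vadd (vscal (mu1 t) (T t)) (vscal (mu2 t) (V t))) ->
  (isophotic a b U <-> exists c : R, forall t, a < t < b -> kn t = c).
Proof.
  intros Hab Hframe _ _ _ Hmu1 Hmu2 Htg Hkn Hgam.
  destruct (geodesic_curvature_constant a b gam T V U kg kn tg Hframe Htg mu1 mu2
              Hab Hkn (fun t Ht => Hmu1 1%nat t Ht) (fun t Ht => Hmu2 1%nat t Ht) Hgam)
    as [k0 [Hk0 Hkg]].
  split.
  - exact (isophotic_normal_curvature_constant a b gam T V U kg kn tg Hframe Htg
             k0 Hk0 Hkg Hab Hkn).
  - intros [c Hc].
    exact (normal_curvature_constant_isophotic a b gam T V U kg kn tg Hframe Htg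
             k0 Hk0 Hkg c Hab Hc).
Qed.
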